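(* Let $s\le L$ be positive integers, $\mathbf{D}\in\mathbb{R}^{N\times N}$, $\mathbf{H}\in\mathbb{R}^{N\times L}$, and consider the system $\mathbf{x}_k=\mathbf{D}\mathbf{x}_{k-1}+\mathbf{H}\mathbf{h}_k$ where the inputs $\mathbf{h}_k\in\mathbb{R}^L$ are $s$-sparse with a common support, i.e. there is a fixed $\mathcal{S}\subseteq\{1,\dots,L\}$ with $|\mathcal{S}|=s$ such that all nonzero entries of every $\mathbf{h}_k$ lie in $\mathcal{S}$. Suppose the system is controllable using $s$-sparse inputs with a common support, and let $K^*$ be the minimum number of such input vectors required to steer the system from any initial state to any final state. With $R^*_{\mathbf{H},s}=\min\{\operatorname{rank}(\mathbf{H}),s\}$ and $q$ the degree of the minimal polynomial of $\mathbf{D}$, $$\frac{N}{R^*_{\mathbf{H},s}}\le K^*\le\min\{q,\ N-R^*_{\mathbf{H},s}+1\}\le N.$$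
   Context: The system is controllable using $s$-sparse inputs with a common support if there exists $\mathcal{S}\subseteq\{1,\dots,L\}$, $|\mathcal{S}|=s$, such that for every initial state $\mathbf{x}_0$ and final state $\mathbf{x}_{\mathrm{final}}$ in $\mathbb{R}^N$ there exist finite $K$ and inputs $\mathbf{h}_1,\dots,\mathbf{h}_K$ supported in $\mathcal{S}$ with $\mathbf{x}_K=\mathbf{x}_{\mathrm{final}}$; equivalently the pair $(\mathbf{D},\mathbf{H}_{\mathcal{S}})$ is controllable, where $\mathbf{H}_{\mathcal{S}}$ denotes the columns of $\mathbf{H}$ indexed by $\mathcal{S}$. *)

From HB Require Import structures.
From mathcomp Require Import all_boot all_order all_algebra.
Set Implicit Arguments. Unset Strict Implicit. Unset Printing Implicit Defensive.
Import Order.TTheory GRing.Theory Num.Theory.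
Local Open Scope ring_scope.

(* State trajectory of x_k = D x_{k-1} + H h_k, starting from x_0;
   inputs h_1, h_2, ... given by h : nat -> 'cV_L (h 0 is unused). *)
Fixpoint traj (R : ringType) (N L : nat) (D : 'M[R]_N) (H : 'M[R]_(N, L))
  (x0 : 'cV[R]_N) (h : nat -> 'cV[R]_L) (k : nat) : 'cV[R]_N :=
  match k with
  | 0 => x0
  | k'.+1 => D *m traj D H x0 h k' + H *m h k'.+1
  end.

Definition supported_in (R : ringType) (L : nat) (S : {set 'I_L}) (v : 'cV[R]_L) :=
  forall i : 'I_L, i \notin S -> v i 0 = 0.

Definition sparse_controllable (R : ringType) (N L : nat)
  (D : 'M[R]_N) (H : 'M[R]_(N, L)) (s : nat) :=
  exists S : {set 'I_L}, #|S| = s /\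
    forall x0 xf : 'cV[R]_N, exists (K : nat) (h : nat -> 'cV[R]_L),
      (forall k, (1 <= k <= K)%N -> supported_in S (h k)) /\ traj D H x0 h K = xf.

Definition steerable_in (R : ringType) (N L : nat)
  (D : 'M[R]_N) (H : 'M[R]_(N, L)) (s K : nat) :=
  exists S : {set 'I_L}, #|S| = s /\
    forall x0 xf : 'cV[R]_N, exists h : nat -> 'cV[R]_L,
      (forall k, (1 <= k <= K)%N -> supported_in S (h k)) /\ traj D H x0 h K = xf.

From HB Require Import structures.
From mathcomp Require Import all_boot all_order all_algebra zify.
Set Implicit Arguments. Unset Strict Implicit. Unset Printing Implicit Defensive.
Import Order.TTheory GRing.Theory Num.Theory.
Local Open Scope ring_scope.

(* Inputs supported in S reach from 0 in K steps exactly the Krylov space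
   spanned by H_S, D H_S, ..., D^(K-1) H_S, so K inputs suffice iff this space
   is the whole state space.  Its dimension is at most K rank H_S <= K R*,
   which gives the lower bound.  The Krylov spaces stop growing once K reaches
   the degree q of the minimal polynomial, and before that they gain at least
   one dimension per step, so a support S with rank H_S >= R* gives full
   dimension after N - R* + 1 steps.  Such a support of size s exists by the
   exchange property of column matroids: a basis of the columns of a
   controlling support can be extended to R* independent columns and padded
   to s columns, without shrinking their span. *)

Section RowMask.
Variables (R : fieldType) (L m : nat) (A : 'M[R]_(L, m)).
Implicit Types (X Y U S : {set 'I_L}).

Definition row_mask X : 'M[R]_(L, m) :=
  \matrix_(j, k) (if j \in X then A j k else 0).

Lemma row_row_mask X j : row j (row_mask X) = if j \in X then row j A else 0.
Proof. by apply/rowP => k; rewrite !mxE; case: (j \in X); rewrite ?mxE. Qed.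

Lemma row_mask0 : row_mask set0 = 0.
Proof. by apply/matrixP => j k; rewrite !mxE in_set0. Qed.

Lemma row_sub_mask X j : j \in X -> (row j A <= row_mask X)%MS.
Proof. by move=> Xj; have := row_sub j (row_mask X); rewrite row_row_mask Xj. Qed.

Lemma row_mask_sub X : (row_mask X <= A)%MS.
Proof.
by apply/row_subP => j; rewrite row_row_mask; case: ifP; rewrite ?row_sub ?sub0mx.
Qed.

Lemma row_maskS X Y : X \subset Y -> (row_mask X <= row_mask Y)%MS.
Proof.
move=> sXY; apply/row_subP => j; rewrite row_row_mask.
by case: ifP => [/(subsetP sXY)/row_sub_mask // | _]; rewrite sub0mx.
Qed.

Lemma row_mask_setU1 a X : (row_mask (a |: X) == row a A + row_mask X)%MS.
Proof.
apply/andP; split; last by rewrite addsmx_sub row_sub_mask ?setU11 ?row_maskS ?subsetUr.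
apply/row_subP => j; rewrite row_row_mask in_setU1.
case: eqVneq => [-> | _] /=; first exact: addsmxSl.
case: ifP => [Xj | _]; last exact: sub0mx.
exact: submx_trans (row_sub_mask Xj) (addsmxSr _ _).
Qed.

Lemma mxrank_row_mask_setU1 a X :
  \rank (row_mask (a |: X)) = (\rank (row_mask X) + ~~ (row a A <= row_mask X)%MS)%N.
Proof.
rewrite (eqmxP (row_mask_setU1 a X)).
have [aX | naX] := boolP (row a A <= row_mask X)%MS.
  by rewrite (addsmx_idPr aX) addn0.
apply/eqP; rewrite eqn_leq addn1; apply/andP; split.
  apply: leq_trans (leq_of_leqif (mxrank_adds_leqif _ _)) _.
  by rewrite addnC -[X in (_ <= X)%N]addn1 leq_add2l rank_leq_row.
rewrite (ltn_leqif (mxrank_leqif_sup (addsmxSr (row a A) _))).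
by rewrite addsmx_sub submx_refl andbT.
Qed.

Lemma row_mask_basis X : exists U,
  [/\ U \subset X, #|U| = \rank (row_mask U) & (row_mask X <= row_mask U)%MS].
Proof.
have [k] := ubnP #|X|; elim: k X => // k IH X ltXk.
have [-> | [a Xa]] := set_0Vmem X.
  by exists set0; rewrite row_mask0 mxrank0 cards0 sub0set submx_refl.
have [|U [sUX cardU sXU]] := IH (X :\ a); first by move: ltXk; rewrite (cardsD1 a) Xa.
have defX : row_mask X = row_mask (a |: X :\ a) by rewrite setD1K.
have {}sUX : U \subset X := subset_trans sUX (subsetDl X [set a]).
have [aU | naU] := boolP (row a A <= row_mask U)%MS.
  by exists U; rewrite defX (eqmxP (row_mask_setU1 _ _)) addsmx_sub aU sXU.
have aNU : a \notin U by apply: contra naU; apply: row_sub_mask.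
exists (a |: U); split.
- by rewrite subUset sub1set Xa.
- by rewrite cardsU1 aNU mxrank_row_mask_setU1 naU cardU addnC.
- by rewrite defX !(eqmxP (row_mask_setU1 _ _)) addsmxS.
Qed.

Lemma mxrank_row_mask_card X : (\rank (row_mask X) <= #|X|)%N.
Proof.
have [U [sUX cardU sXU]] := row_mask_basis X.
by rewrite (leq_trans (mxrankS sXU)) // -cardU subset_leq_card.
Qed.

Lemma row_mask_extend U k : (#|U| <= k <= L)%N -> exists S,
  [/\ U \subset S, #|S| = k
    & minn (\rank A) (\rank (row_mask U) + (k - #|U|)) <= \rank (row_mask S)]%N.
Proof.
elim: k => [|k IH] /andP [Uk kL].
  exists U; rewrite subxx sub0n addn0 geq_minr; split=> //.
  by apply/eqP; rewrite -leqn0.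
have [eqUk | neUk] := eqVneq #|U| k.+1.
  by exists U; rewrite subxx eqUk subnn addn0 geq_minr.
have {}Uk : (#|U| <= k)%N by rewrite -ltnS ltn_neqAle neUk.
have [S [sUS cardS rS]] := IH (introT andP (conj Uk (ltnW kL))).
have [a aNS adv] : exists2 a, a \notin S &
    (\rank (row_mask S) < \rank A)%N -> ~~ (row a A <= row_mask S)%MS.
  have [ltSA | geSA] := ltnP (\rank (row_mask S)) (\rank A).
    have /row_subPn [a naS] : ~~ (A <= row_mask S)%MS.
      by apply: contraL ltSA => /mxrankS; rewrite leqNgt.
    by exists a => //; apply: contra naS; apply: row_sub_mask.
  have : (0 < #|~: S|)%N by have := cardsC S; rewrite card_ord cardS; lia.
  case/card_gt0P => a; rewrite in_setC => aNS.
  by exists a => // /(leq_trans geSA); rewrite ltnn.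
exists (a |: S); split.
- exact: subset_trans sUS (subsetUr _ _).
- by rewrite cardsU1 aNS cardS.
rewrite mxrank_row_mask_setU1.
have [ltSA | geSA] := ltnP (\rank (row_mask S)) (\rank A).
  by rewrite adv //; move: rS; rewrite subSn //; lia.
by move: geSA; lia.
Qed.

Lemma row_mask_exchange X : exists S,
  [/\ #|S| = #|X|, (row_mask X <= row_mask S)%MS
    & minn (\rank A) #|X| <= \rank (row_mask S)]%N.
Proof.
have [U [sUX cardU sXU]] := row_mask_basis X.
have UX := subset_leq_card sUX.
have XL : (#|X| <= L)%N by rewrite -[X in (_ <= X)%N]card_ord max_card.
have [S [sUS cardS rS]] := row_mask_extend (introT andP (conj UX XL)).
exists S; split => //; first exact: submx_trans sXU (row_maskS sUS).
by rewrite -cardU subnKC in rS.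
Qed.

End RowMask.

Section Krylov.
Variables (R : fieldType) (m N : nat) (A : 'M[R]_N).
Implicit Types B : 'M[R]_(m, N).

Definition krylov B K := (\sum_(i < K) <<B *m A ^+ i>>)%MS.

Lemma krylov_term B K i : (i < K)%N -> (B *m A ^+ i <= krylov B K)%MS.
Proof. by move=> iK; rewrite (sumsmx_sup (Ordinal iK)) ?genmxE. Qed.

Lemma krylov_leq B K K' : (K <= K')%N -> (krylov B K <= krylov B K')%MS.
Proof.
move=> KK'; apply/sumsmx_subP => i _; rewrite genmxE krylov_term //.
exact: leq_trans (ltn_ord i) KK'.
Qed.

Lemma krylovS B B' K : (B <= B')%MS -> (krylov B K <= krylov B' K)%MS.
Proof. by move=> sBB'; apply: sumsmxS => i _; rewrite !genmxE submxMr. Qed.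

Lemma krylovMr B K : (krylov B K *m A <= krylov B K.+1)%MS.
Proof.
rewrite sumsmxMr; apply/sumsmx_subP => i _.
by rewrite (eqmxMr _ (genmxE _)) -mulmxA -[A ^+ i *m A]exprSr krylov_term ?ltnS.
Qed.

Lemma krylov_stable B K :
  (B *m A ^+ K <= krylov B K)%MS -> forall k, (krylov B k <= krylov B K)%MS.
Proof.
move=> sK.
have invK : (krylov B K *m A <= krylov B K)%MS.
  apply: submx_trans (krylovMr B K) _; apply/sumsmx_subP => i _; rewrite genmxE.
  have := ltn_ord i; rewrite ltnS leq_eqVlt => /predU1P [-> // | ]; exact: krylov_term.
have powers i : (B *m A ^+ i <= krylov B K)%MS.
  elim: i => [|i IH]; last by rewrite exprSr mulmxA (submx_trans (submxMr A IH)).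
  have [K0 | K_gt0] := posnP K; last exact: krylov_term.
  by move: sK; rewrite K0.
by move=> k; apply/sumsmx_subP => i _; rewrite genmxE.
Qed.

Lemma krylov_annihilated B d (c : 'I_d -> R) :
  A ^+ d = \sum_(i < d) c i *: A ^+ i -> forall k, (krylov B k <= krylov B d)%MS.
Proof.
move=> Ad; apply: krylov_stable; rewrite Ad mulmx_sumr; apply: summx_sub => i _.
by rewrite -scalemxAr scalemx_sub ?krylov_term.
Qed.

Lemma mxrank_krylov B K : (\rank (krylov B K) <= K * \rank B)%N.
Proof.
apply: leq_trans (leq_of_leqif (mxrank_sum_leqif _)) _.
rewrite /= -[X in (X * _)%N]card_ord -sum_nat_const; apply: leq_sum => i _.
by rewrite mxrank_gen mxrankM_maxl.
Qed.

Lemma mxrank_krylov_growth B K k :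
  (minn (\rank (krylov B k)) (\rank B + K) <= \rank (krylov B K.+1))%N.
Proof.
elim: K => [|K IH].
  rewrite addn0 (leq_trans (geq_minr _ _)) // mxrankS //.
  by have := krylov_term B (ltnSn 0); rewrite expr0 mulmx1.
have sK1 := krylov_leq B (leqnSn K.+1).
have [stable | grows] := boolP (B *m A ^+ K.+1 <= krylov B K.+1)%MS.
  rewrite (leq_trans (geq_minl _ _)) // mxrankS //.
  exact: submx_trans (krylov_stable stable k) sK1.
have : (\rank (krylov B K.+1) < \rank (krylov B K.+2))%N.
  rewrite (ltn_leqif (mxrank_leqif_sup sK1)); apply: contra grows.
  exact: submx_trans (krylov_term B (ltnSn _)).
by move: IH; rewrite addnS; lia.
Qed.

End Krylov.

Lemma trmxX (R : comPzRingType) n (A : 'M[R]_n) k : (A ^+ k)^T = A^T ^+ k.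
Proof.
elim: k => [|k IH]; first by rewrite !expr0 trmx1.
by rewrite exprS -mulmxE trmx_mul IH mulmxE -exprSr.
Qed.

Lemma mxminpoly_powers (R : fieldType) n (A : 'M[R]_n.+1) :
  exists c : 'I_(degree_mxminpoly A) -> R,
    A ^+ degree_mxminpoly A = \sum_i c i *: A ^+ i.
Proof.
have := horner_mx_mem A 'X^(degree_mxminpoly A).
rewrite rmorphXn /= horner_mx_X => /submxP [u Au]; exists (fun i => u 0 i).
apply: (can_inj (@mxvecK _ n.+1 n.+1)); rewrite Au mulmx_sum_row linear_sum.
by apply: eq_bigr => i _; rewrite rowK linearZ.
Qed.

Section Reachability.
Variables (R : fieldType) (n L : nat) (D : 'M[R]_n.+1) (H : 'M[R]_(n.+1, L)).
Local Notation N := n.+1.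
Implicit Types (X : {set 'I_L}) (h : nat -> 'cV[R]_L).

Lemma traj_sum x0 h K :
  traj D H x0 h K = D ^+ K *m x0 + \sum_(i < K) D ^+ i *m H *m h (K - i)%N.
Proof.
elim: K => [|K IH] /=; first by rewrite expr0 mul1mx big_ord0 addr0.
rewrite IH mulmxDr mulmxA -[D *m D ^+ K]exprS big_ord_recl /= expr0 mul1mx.
rewrite subn0 mulmx_sumr -addrA [H *m _ + _]addrC; congr (_ + (_ + _)).
by apply: eq_bigr => i _; rewrite !mulmxA -[D *m D ^+ i]exprS subSS.
Qed.

Definition masked_input X (u : 'rV[R]_L) : 'cV[R]_L :=
  \col_j (if j \in X then u 0 j else 0).

Lemma masked_input_supported X u : supported_in X (masked_input X u).
Proof. by move=> j /negPf Xj; rewrite mxE Xj. Qed.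

Lemma masked_inputK X (v : 'cV[R]_L) : supported_in X v -> masked_input X v^T = v.
Proof.
move=> sv; apply/colP => j; rewrite !mxE.
by case: ifP => // /negbT /sv ->.
Qed.

Lemma mul_row_mask X u : u *m row_mask H^T X = (H *m masked_input X u)^T.
Proof.
apply/rowP => k; rewrite !mxE; apply: eq_bigr => j _; rewrite !mxE.
by case: (j \in X); rewrite ?mulr0 ?mul0r // mulrC.
Qed.

(* [row_mask H^T X] is the transpose of H_X, so the row space of
   [reach_space X K] is the transpose of the span of H_X, D H_X, ...,
   D^(K-1) H_X: the states reachable from 0 in K steps with inputs
   supported in X. *)
Definition reach_space X K := krylov D^T (row_mask H^T X) K.

Lemma traj0_sub_reach X h K :
    (forall k, (1 <= k <= K)%N -> supported_in X (h k)) ->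
  ((traj D H 0 h K)^T <= reach_space X K)%MS.
Proof.
move=> sh; rewrite traj_sum mulmx0 add0r linear_sum; apply: summx_sub => i _.
have shi : supported_in X (h (K - i)%N) by apply: sh; have := ltn_ord i; lia.
rewrite /= -mulmxA trmx_mul -{1}(masked_inputK shi) -mul_row_mask trmxX -mulmxA.
exact: submx_trans (submxMl _ _) (krylov_term _ _ (ltn_ord i)).
Qed.

Lemma traj_reach X K x0 xf :
    ((xf - D ^+ K *m x0)^T <= reach_space X K)%MS ->
  exists h, (forall k, supported_in X (h k)) /\ traj D H x0 h K = xf.
Proof.
case/sub_sums_genmxP => u reach_u.
exists (fun k => masked_input X (oapp u 0 (insub (K - k)%N))).
split=> [k | ]; first exact: masked_input_supported.
rewrite traj_sum -[xf](subrK (D ^+ K *m x0)) addrC; congr (_ + _).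
apply: trmx_inj; rewrite reach_u linear_sum; apply: eq_bigr => i _ /=.
rewrite subKn ?(ltnW (ltn_ord i)) // valK /= -mulmxA trmx_mul -mul_row_mask trmxX.
by rewrite mulmxA.
Qed.

Definition steerableb s K :=
  [exists X : {set 'I_L}, (#|X| == s) && row_full (reach_space X K)].

Lemma steerable_inP s K : reflect (steerable_in D H s K) (steerableb s K).
Proof.
apply: (iffP existsP) => [[X /andP [/eqP cardX full]] | [X [cardX steer]]].
  exists X; split=> // x0 xf.
  by have [h [sh <-]] := traj_reach (submx_full (xf - D ^+ K *m x0)^T full); exists h.
exists X; rewrite cardX eqxx /= -sub1mx; apply/row_subP => j.
have [h [sh trajh]] := steer 0 (row j 1%:M)^T.
by have := traj0_sub_reach sh; rewrite trajh trmxK.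
Qed.

Lemma steerable_in_mxminpoly_degree s :
  sparse_controllable D H s -> steerable_in D H s (degree_mxminpoly D).
Proof.
case=> X [cardX ctrl]; apply/steerable_inP/existsP; exists X.
rewrite cardX eqxx /= -sub1mx; apply/row_subP => j.
have [K [h [sh trajh]]] := ctrl 0 (row j 1%:M)^T.
have [c Dd] := mxminpoly_powers D.
have DTd : D^T ^+ degree_mxminpoly D = \sum_i c i *: D^T ^+ i.
  by rewrite -trmxX Dd linear_sum; apply: eq_bigr => i _; rewrite linearZ /= trmxX.
apply: submx_trans (krylov_annihilated _ DTd K).
by have := traj0_sub_reach sh; rewrite trajh trmxK.
Qed.

Lemma steerable_in_dim_bound s K :
  steerable_in D H s K -> (N <= K * minn (\rank H) s)%N.
Proof.
case/steerable_inP/existsP => X /andP [/eqP cardX /eqP full].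
rewrite -[k in (k <= _)%N]full (leq_trans (mxrank_krylov _ _ _)) //.
rewrite leq_mul2l leq_min -(mxrank_tr H) mxrankS ?row_mask_sub //.
by rewrite -cardX mxrank_row_mask_card orbT.
Qed.

Lemma steerable_in_rank_deficiency s :
  sparse_controllable D H s -> steerable_in D H s (N - minn (\rank H) s + 1).
Proof.
move=> /steerable_in_mxminpoly_degree /steerable_inP /existsP.
case=> X0 /andP [/eqP cardX0 full0].
have [S [cardS sX0S rankS]] := row_mask_exchange H^T X0.
apply/steerable_inP/existsP; exists S; rewrite cardS cardX0 eqxx /=.
have /eqP fullS : row_full (reach_space S (degree_mxminpoly D)).
  by rewrite -sub1mx (submx_trans _ (krylovS _ _ sX0S)) ?sub1mx.
have := mxrank_krylov_growth D^T (row_mask H^T S) (N - minn (\rank H) s)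
  (degree_mxminpoly D).
move: rankS; rewrite /row_full addn1 fullS mxrank_tr cardX0 eqn_leq rank_leq_col /=.
by have := rank_leq_row H; rewrite /reach_space; lia.
Qed.

End Reachability.

Theorem corollary3 (R : realFieldType) (n L s : nat)
  (D : 'M[R]_n.+1) (H : 'M[R]_(n.+1, L)) :
  (0 < s)%N -> (s <= L)%N ->
  sparse_controllable D H s ->
  let N := n.+1 in
  let Rs := minn (\rank H) s in
  let q := (size (mxminpoly D)).-1 in
  exists Kstar : nat,
    steerable_in D H s Kstar /\
    (forall K, steerable_in D H s K -> (Kstar <= K)%N) /\
    (N%:R / Rs%:R <= Kstar%:R :> R) /\
    (Kstar <= minn q (N - Rs + 1))%N /\
    (minn q (N - Rs + 1) <= N)%N.
Proof.
(* 0 < s and s <= L are implied by controllability. *)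
move=> _ _ ctrl N Rs q.
have ex_steer : exists K, steerableb D H s K.
  by exists (degree_mxminpoly D); apply/steerable_inP/steerable_in_mxminpoly_degree.
exists (ex_minn ex_steer); case: ex_minnP => Kstar /steerable_inP steerK minK.
have {}minK K : steerable_in D H s K -> (Kstar <= K)%N by move/steerable_inP/minK.
have NK : (N <= Kstar * Rs)%N := steerable_in_dim_bound steerK.
have Rs_gt0 : (0 < Rs)%N by move: NK; case: (Rs) => //; rewrite muln0.
split=> //; split=> //; split.
  by rewrite ler_pdivrMr ?ltr0n // -natrM ler_nat.
split; last by rewrite geq_min; apply/orP; right; lia.
rewrite /q size_mxminpoly /= leq_min !minK //.
  exact: steerable_in_rank_deficiency.
exact: steerable_in_mxminpoly_degree.
Qed.
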